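(* For every graph $G$, $\gamma_{oiR}(G)<\gamma_{oidR}(G)$.
   Context: Graphs are finite and simple (with at least one vertex). A DRD function of $G$ is $f:V(G)\to\{0,1,2,3\}$ such that every vertex with value $0$ has a neighbor with value $3$ or two neighbors with value $2$, and every vertex with value $1$ has a neighbor with value at least $2$; it is an OIDRD function if the set of vertices with value $0$ is independent, and $\gamma_{oidR}(G)$ is the minimum weight $\sum_v f(v)$ of an OIDRD function. A Roman dominating function is $f:V(G)\to\{0,1,2\}$ such that every vertex with value $0$ has a neighbor with value $2$; it is an OIRD function if the set of vertices with value $0$ is independent, and $\gamma_{oiR}(G)$ is the minimum weight of an OIRD function. *)

From mathcomp Require Import all_boot.
Set Implicit Arguments. Unset Strict Implicit. Unset Printing Implicit Defensive.

Definition simple_graph (T : finType) (adj : rel T) : Prop :=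
  symmetric adj /\ irreflexive adj.

Section Dom.
Variables (T : finType) (adj : rel T).

Definition weight (k : nat) (f : {ffun T -> 'I_k}) : nat := \sum_(v : T) (f v : nat).

Definition zero_indep k (f : {ffun T -> 'I_k}) : bool :=
  [forall u, forall v, ((f u : nat) == 0) && ((f v : nat) == 0) ==> ~~ adj u v].

Definition is_DRD (f : {ffun T -> 'I_4}) : bool :=
  [forall v, ((f v : nat) == 0) ==>
       ([exists u, adj v u && ((f u : nat) == 3)] ||
        [exists u, exists w, [&& u != w, adj v u, adj v w,
                                 (f u : nat) == 2 & (f w : nat) == 2]])]
  && [forall v, ((f v : nat) == 1) ==> [exists u, adj v u && (2 <= f u)]].

Definition is_OIDRD (f : {ffun T -> 'I_4}) : bool := is_DRD f && zero_indep f.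

Definition is_RD (f : {ffun T -> 'I_3}) : bool :=
  [forall v, ((f v : nat) == 0) ==> [exists u, adj v u && ((f u : nat) == 2)]].

Definition is_OIRD (f : {ffun T -> 'I_3}) : bool := is_RD f && zero_indep f.

(* minimum weights; the constant-maximal function is always admissible,
   so the starting value 3|V| (resp. 2|V|) does not affect the minimum *)
Definition gamma_oidR : nat :=
  \big[minn/(3 * #|T|)]_(f : {ffun T -> 'I_4} | is_OIDRD f) weight f.

Definition gamma_oiR : nat :=
  \big[minn/(2 * #|T|)]_(f : {ffun T -> 'I_3} | is_OIRD f) weight f.
End Dom.

(* Let f be an OIDRD function of a nonempty graph. Some vertex u has
   f u >= 2, since a vertex labelled 0 or 1 needs a neighbour labelled at
   least 2. Lowering the label of u by one and capping every other label at 2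
   gives an OIRD function of smaller weight: the set of zeros does not change,
   and a zero that had a neighbour labelled 3, or two neighbours labelled 2,
   still has a neighbour labelled 2, because at most one of them is u and u
   keeps the label 2 when it had the label 3. *)

From HB Require Import structures.
From mathcomp Require Import all_boot.
From mathcomp Require Import zify.

HB.instance Definition _ := SemiGroup.isComLaw.Build nat minn minnA minnC.

Lemma geq_bigmin_cond (I : finType) (P : pred I) (F : I -> nat) m j :
  P j -> \big[minn/m]_(i | P i) F i <= F j.
Proof. by move=> Pj; rewrite (bigD1 j) //= geq_minl. Qed.

Lemma ltn_bigmin_cond (I : finType) (P : pred I) (F : I -> nat) m c :
  c < m -> (forall i, P i -> c < F i) -> c < \big[minn/m]_(i | P i) F i.
Proof.
by move=> cm cF; apply: (big_ind (fun x => c < x)) => // x y; rewrite ltn_min => ->.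
Qed.

Section Relabelling.
Set Implicit Arguments.
Unset Strict Implicit.

Variables (T : finType) (adj : rel T).

Lemma weight_leq k (f : {ffun T -> 'I_k}) : weight f <= k.-1 * #|T|.
Proof.
rewrite /weight mulnC -sum_nat_const leq_sum // => v _.
by have := ltn_ord (f v); lia.
Qed.

Lemma gamma_oiR_leq : gamma_oiR adj <= 2 * #|T|.
Proof.
apply: (big_ind (fun x => x <= 2 * #|T|)) => [||g _]; first exact: leqnn.
  by move=> x y x_le _; rewrite geq_min x_le.
exact: weight_leq.
Qed.

Lemma eq_zero_indep k l (f : {ffun T -> 'I_k}) (g : {ffun T -> 'I_l}) :
  (forall v, ((f v : nat) == 0) = ((g v : nat) == 0)) ->
  zero_indep adj f = zero_indep adj g.
Proof.
by move=> fg; apply: eq_forallb => u; apply: eq_forallb => v; rewrite !fg.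
Qed.

Lemma DRD_exists_ge2 (f : {ffun T -> 'I_4}) :
  0 < #|T| -> is_DRD adj f -> exists u, 2 <= f u.
Proof.
case/card_gt0P => x _ /andP [/forallP dom0 /forallP dom1].
have [fx2|] := leqP 2 (f x); first by exists x.
case fx: (f x : nat) => [|[|//]] _.
- have /orP [/existsP [u /andP [_ /eqP fu]]|] := implyP (dom0 x) (introT eqP fx).
    by exists u; rewrite fu.
  by case/existsP => u /existsP [w /and5P [_ _ _ /eqP fu _]]; exists u; rewrite fu.
- have /existsP [u /andP [_ fu]] := implyP (dom1 x) (introT eqP fx).
  by exists u.
Qed.

Definition rd_of_drd (f : {ffun T -> 'I_4}) (u : T) : {ffun T -> 'I_3} :=
  [ffun v => inord (if v == u then (f u).-1 else minn (f v) 2)].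

Variables (f : {ffun T -> 'I_4}) (u : T).
Hypothesis fu_ge2 : 2 <= f u.

Lemma rd_of_drdE v :
  (rd_of_drd f u v : nat) = if v == u then (f u).-1 else minn (f v) 2.
Proof. by rewrite ffunE inordK //; have := ltn_ord (f u); case: eqP; lia. Qed.

Lemma rd_of_drd_eq0 v :
  ((rd_of_drd f u v : nat) == 0) = ((f v : nat) == 0).
Proof. by rewrite rd_of_drdE; case: (eqVneq v u) => [->|_]; lia. Qed.

Lemma is_RD_rd_of_drd : is_DRD adj f -> is_RD adj (rd_of_drd f u).
Proof.
move=> /andP [/forallP dom0 _]; apply/forallP => v.
rewrite rd_of_drd_eq0; apply/implyP => fv0.
have nbr_ge2 w : adj v w -> 2 <= f w -> (w != u) || ((f u : nat) == 3) ->
    [exists w', adj v w' && ((rd_of_drd f u w' : nat) == 2)].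
  move=> vw fw wu; apply/existsP; exists w; rewrite vw rd_of_drdE /=.
  by case: (eqVneq w u) wu => [_ /eqP->|_ _] //; lia.
have /orP [/existsP [w /andP [vw /eqP fw]]|] := implyP (dom0 v) fv0.
  by apply: (nbr_ge2 w vw); [rewrite fw | case: (eqVneq w u) => // <-; rewrite fw].
case/existsP => w1 /existsP [w2 /and5P [w12 vw1 vw2 /eqP fw1 /eqP fw2]].
have [w1u|w1u] := eqVneq w1 u.
  by apply: (nbr_ge2 w2 vw2); [rewrite fw2 | rewrite -w1u eq_sym w12].
by apply: (nbr_ge2 w1 vw1); [rewrite fw1 | rewrite w1u].
Qed.

Lemma weight_rd_of_drd : weight (rd_of_drd f u) < weight f.
Proof.
rewrite /weight (bigD1 u) //= [X in _ < X](bigD1 u) //= rd_of_drdE eqxx.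
rewrite -addSn leq_add //; first by lia.
by apply: leq_sum => v /negbTE vu; rewrite rd_of_drdE vu geq_minl.
Qed.

Lemma gamma_oiR_lt_weight : is_OIDRD adj f -> gamma_oiR adj < weight f.
Proof.
move=> /andP [fDRD f_indep].
have gOIRD : is_OIRD adj (rd_of_drd f u).
  by rewrite /is_OIRD is_RD_rd_of_drd // (eq_zero_indep rd_of_drd_eq0).
by apply: leq_ltn_trans weight_rd_of_drd; apply: geq_bigmin_cond.
Qed.

End Relabelling.

Theorem proposition2 (T : finType) (adj : rel T) :
  simple_graph adj -> 0 < #|T| ->
  gamma_oiR adj < gamma_oidR adj.
Proof.
move=> _ T_gt0; apply: ltn_bigmin_cond => [|f fOIDRD].
  by apply: leq_ltn_trans (gamma_oiR_leq adj) _; rewrite ltn_pmul2r.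
have [u fu_ge2] := DRD_exists_ge2 T_gt0 (andP fOIDRD).1.
exact: gamma_oiR_lt_weight fu_ge2 fOIDRD.
Qed.
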